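(* Let $a\in\mathbb{R}$ and $w\in\mathbb{C}\setminus\mathbb{R}$ with $(a,w)\in D_c$, and suppose $\varphi := |\operatorname{Arg}(w)|\in(\pi/2,\pi)$. Then $\tau_c(a,w) > 1$ if and only if one of the following holds: (i) $a \ge 0$ and $|w| < R_2(-a;\varphi)$; (ii) $-M(\varphi) < a < 0$ and $R_1(-a;\varphi) < |w| < R_2(-a;\varphi)$.
   Context: $\operatorname{Arg}(w)\in(-\pi,\pi]$ is the principal argument; $\arccos:[-1,1]\to[0,\pi]$. $D_c := \{(a,w)\in\mathbb{R}\times(\mathbb{C}\setminus\{0\}):\operatorname{Re}(w)<a<|w|\}$, and $\tau_c(a,w) := \frac{1}{\sqrt{|w|^2-a^2}}[|\operatorname{Arg}(w)|-\arccos(a/|w|)]$. For $\varphi\in(\pi/2,\pi)$: $C(\theta;\varphi) := \theta\cot(\theta-\varphi)$ on $[0,\varphi)$; $S(\varphi)\in(0,\varphi)$ is the unique solution of $\sin(2\theta-2\varphi) = 2\theta$; $C(\cdot;\varphi)$ is strictly increasing on $[0,S(\varphi)]$ and strictly decreasing on $[S(\varphi),\varphi)$ with maximum $M(\varphi) := \cos^2(S(\varphi)-\varphi)$, $C(0;\varphi)=0$, and $C(\theta;\varphi)\to-\infty$ as $\theta\uparrow\varphi$. $C_1^{-1}(\cdot;\varphi):[0,M(\varphi)]\to[0,S(\varphi)]$ and $C_2^{-1}(\cdot;\varphi):(-\infty,M(\varphi)]\to[S(\varphi),\varphi)$ are the inverses of the restrictions of $C(\cdot;\varphi)$ to $[0,S(\varphi)]$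 and $[S(\varphi),\varphi)$. $R_j(r;\varphi) := -C_j^{-1}(r;\varphi)/\sin(C_j^{-1}(r;\varphi)-\varphi)$ for $j=1,2$ on the respective domains. *)

From Stdlib Require Import Reals Lra ClassicalEpsilon.
From Coquelicot Require Import Coquelicot.
Open Scope R_scope.

Definition Arg (w : C) : R :=
  epsilon (inhabits 0)
    (fun t => -PI < t <= PI /\ w = (Cmod w * cos t, Cmod w * sin t)%R).

Definition D_c (a : R) (w : C) : Prop :=
  w <> 0%C /\ Re w < a < Cmod w.

Definition tau_c (a : R) (w : C) : R :=
  / sqrt (Cmod w ^ 2 - a ^ 2) * (Rabs (Arg w) - acos (a / Cmod w)).

Definition Cfun (theta phi : R) : R := theta * (cos (theta - phi) / sin (theta - phi)).

Definition S (phi : R) : R :=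
  epsilon (inhabits 0)
    (fun t => 0 < t < phi /\ sin (2 * t - 2 * phi) = 2 * t).

Definition M (phi : R) : R := (cos (S phi - phi)) ^ 2.

Definition C1inv (r phi : R) : R :=
  epsilon (inhabits 0) (fun t => 0 <= t <= S phi /\ Cfun t phi = r).

Definition C2inv (r phi : R) : R :=
  epsilon (inhabits 0) (fun t => S phi <= t < phi /\ Cfun t phi = r).

Definition R_1 (r phi : R) : R := - C1inv r phi / sin (C1inv r phi - phi).
Definition R_2 (r phi : R) : R := - C2inv r phi / sin (C2inv r phi - phi).

(* Write phi = |Arg w| in (pi/2, pi) and r = |w|.  Since Re w = r cos phi, the
   hypothesis (a,w) in D_c reads r cos phi < a < r, so alpha := arccos(a/r)
   lies in (0, phi), and with theta := phi - alpha we get the polar form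
   a = r cos(phi - theta), sqrt(r^2 - a^2) = r sin(phi - theta), hence
   tau_c(a,w) > 1  <->  r sin(phi - theta) < theta.
   Because C(theta;phi) sin(phi - theta) = - theta cos(phi - theta), for a <> 0
   this becomes a * (C(theta;phi) + a) < 0, i.e. a comparison of C(theta;phi)
   with the level -a. *)
From Stdlib Require Import Reals Lra ClassicalEpsilon Ranalysis5.
From Coquelicot Require Import Coquelicot.
Open Scope R_scope.

(* Numerator of the derivative of C(.;phi): C'(t) = Cnum phi t / (2 sin^2 (t - phi)). *)
Definition Cnum (phi t : R) : R := sin (2 * t - 2 * phi) - 2 * t.

Lemma sin_shift_neg phi t : 0 <= t < phi -> phi < PI -> sin (t - phi) < 0.
Proof. intros; apply sin_lt_0_var; lra. Qed.

Lemma continuity_pt_of_is_derive f t l : is_derive f t l -> continuity_pt f t.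
Proof.
  intro H. apply is_derive_Reals in H.
  apply derivable_continuous_pt. exact (exist _ l H).
Qed.

(* |sin d| < d for d > 0: this makes Cnum phi strictly decreasing. *)
Lemma abs_sin_lt d : 0 < d -> - d < sin d < d.
Proof.
  intros Hd; split; [|apply sin_lt_x; lra].
  destruct (Rle_dec d PI).
  - pose proof (sin_ge_0 d ltac:(lra) r); lra.
  - pose proof (SIN_bound d); pose proof PI2_3_2; lra.
Qed.

Lemma Cnum_decreasing phi x y : x < y -> Cnum phi y < Cnum phi x.
Proof.
  intros Hxy; unfold Cnum.
  pose proof (form4 (2 * y - 2 * phi) (2 * x - 2 * phi)) as F.
  replace ((2 * y - 2 * phi - (2 * x - 2 * phi)) / 2) with (y - x) in F by field.
  set (c := cos _) in F.
  assert (Hc : -1 <= c <= 1) by apply COS_bound.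
  pose proof (abs_sin_lt (y - x) ltac:(lra)).
  destruct (Rle_dec 0 (sin (y - x))); nra.
Qed.

Lemma is_derive_Cnum phi t : is_derive (Cnum phi) t (2 * cos (2 * t - 2 * phi) - 2).
Proof. unfold Cnum; auto_derive; auto. unfold Rminus; ring. Qed.

Lemma is_derive_Cfun phi t : sin (t - phi) <> 0 ->
  is_derive (fun s => Cfun s phi) t (Cnum phi t / (2 * sin (t - phi) ^ 2)).
Proof.
  intros Hs. unfold Cfun, Cnum. auto_derive; auto.
  replace (2 * t - 2 * phi) with (2 * (t - phi)) by ring. rewrite sin_2a.
  pose proof (sin2_cos2 (t - phi)) as Hpy. unfold Rsqr in Hpy.
  replace (t + - phi) with (t - phi) by ring.
  set (s := sin (t - phi)) in *. set (c := cos (t - phi)) in *.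
  field_simplify; auto.
  replace (- c ^ 2 * t + c * s - s ^ 2 * t) with (c * s - t * (s * s + c * c)) by ring.
  rewrite Hpy. field. auto.
Qed.

(* S(phi) is well defined: Cnum phi changes sign on (0, phi). *)
Lemma S_spec phi : PI / 2 < phi < PI ->
  0 < S phi < phi /\ sin (2 * S phi - 2 * phi) = 2 * S phi.
Proof.
  intros Hp. unfold S. apply epsilon_spec.
  assert (H0 : 0 < Cnum phi 0).
  { unfold Cnum. replace (2 * 0 - 2 * phi) with (- (2 * phi)) by ring. rewrite sin_neg.
    pose proof (sin_lt_0 (2 * phi) ltac:(lra) ltac:(lra)); lra. }
  assert (H1 : Cnum phi phi < 0).
  { unfold Cnum. replace (2 * phi - 2 * phi) with 0 by ring. rewrite sin_0. lra. }
  destruct (IVT_interv (fun t => - Cnum phi t) 0 phi) as [z [Hz Hfz]]; try lra.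
  - intros t _. apply continuity_pt_of_is_derive with (l := - (2 * cos (2 * t - 2 * phi) - 2)).
    apply (is_derive_opp (Cnum phi)). apply is_derive_Cnum.
  - exists z. assert (z <> 0) by (intro; subst; lra).
    assert (z <> phi) by (intro; subst; lra).
    unfold Cnum in Hfz. split; lra.
Qed.

Section ShapeOfC.
Variable phi : R.
Hypothesis Hphi : PI / 2 < phi < PI.

Lemma Cnum_S : Cnum phi (S phi) = 0.
Proof. destruct (S_spec phi Hphi) as [_ E]. unfold Cnum; lra. Qed.

Lemma Cfun_mvt x y : 0 <= x -> x < y -> y < phi ->
  exists c, x < c < y /\
    Cfun y phi - Cfun x phi = Cnum phi c / (2 * sin (c - phi) ^ 2) * (y - x).
Proof.
  intros. destruct (MVT_cor2 (fun t => Cfun t phi)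
    (fun c => Cnum phi c / (2 * sin (c - phi) ^ 2)) x y) as [c [E Hc]]; auto.
  - intros c Hc. apply is_derive_Reals. apply is_derive_Cfun.
    pose proof (sin_shift_neg phi c ltac:(lra) ltac:(lra)). lra.
  - exists c; auto.
Qed.

Lemma Cfun_increasing x y : 0 <= x -> x < y -> y <= S phi -> Cfun x phi < Cfun y phi.
Proof.
  intros. pose proof (S_spec phi Hphi).
  destruct (Cfun_mvt x y) as [c [Hc E]]; try lra.
  pose proof (Cnum_decreasing phi c (S phi) ltac:(lra)). rewrite Cnum_S in *.
  pose proof (sin_shift_neg phi c ltac:(lra) ltac:(lra)).
  assert (0 < Cnum phi c / (2 * sin (c - phi) ^ 2)).
  { apply Rdiv_lt_0_compat; [lra|]. simpl; nra. }
  nra.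
Qed.

Lemma Cfun_decreasing x y : S phi <= x -> x < y -> y < phi -> Cfun y phi < Cfun x phi.
Proof.
  intros. pose proof (S_spec phi Hphi).
  destruct (Cfun_mvt x y) as [c [Hc E]]; try lra.
  pose proof (Cnum_decreasing phi (S phi) c ltac:(lra)). rewrite Cnum_S in *.
  pose proof (sin_shift_neg phi c ltac:(lra) ltac:(lra)).
  assert (Cnum phi c / (2 * sin (c - phi) ^ 2) < 0).
  { assert (D : 0 < 2 * sin (c - phi) ^ 2) by (simpl; nra).
    pose proof (Rinv_0_lt_compat _ D). unfold Rdiv. nra. }
  nra.
Qed.

Lemma Cfun_increasing_iff x y : 0 <= x <= S phi -> 0 <= y <= S phi ->
  (Cfun x phi < Cfun y phi <-> x < y).
Proof.
  intros Hx Hy. split; intro Hlt.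
  - destruct (Rtotal_order x y) as [h|[h|h]]; auto; [subst; lra|].
    pose proof (Cfun_increasing y x ltac:(lra) h ltac:(lra)); lra.
  - apply Cfun_increasing; lra.
Qed.

Lemma Cfun_decreasing_iff x y : S phi <= x < phi -> S phi <= y < phi ->
  (Cfun x phi < Cfun y phi <-> y < x).
Proof.
  intros Hx Hy. split; intro Hlt.
  - destruct (Rtotal_order y x) as [h|[h|h]]; auto; [subst; lra|].
    pose proof (Cfun_decreasing x y ltac:(lra) h ltac:(lra)); lra.
  - apply Cfun_decreasing; lra.
Qed.

Lemma Cfun_0 : Cfun 0 phi = 0.
Proof. unfold Cfun; ring. Qed.

Lemma Cfun_S : Cfun (S phi) phi = M phi.
Proof.
  destruct (S_spec phi Hphi) as [HS E].
  replace (2 * S phi - 2 * phi) with (2 * (S phi - phi)) in E by ring.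
  rewrite sin_2a in E.
  pose proof (sin_shift_neg phi (S phi) ltac:(lra) ltac:(lra)).
  unfold Cfun, M.
  replace (S phi) with (sin (S phi - phi) * cos (S phi - phi)) at 1 by lra.
  field. lra.
Qed.

Lemma M_pos : 0 < M phi.
Proof.
  rewrite <- Cfun_S, <- Cfun_0. pose proof (S_spec phi Hphi).
  apply Cfun_increasing; lra.
Qed.

Lemma Cfun_le_M t : 0 <= t < phi -> Cfun t phi <= M phi.
Proof.
  intros. rewrite <- Cfun_S. destruct (Rtotal_order t (S phi)) as [h|[h|h]].
  - left; apply Cfun_increasing; lra.
  - subst; lra.
  - left; apply Cfun_decreasing; lra.
Qed.

Lemma Cfun_nonneg t : 0 <= t <= S phi -> 0 <= Cfun t phi.
Proof.
  intros. rewrite <- Cfun_0. destruct (Req_dec t 0) as [->|]; [lra|].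
  left; apply Cfun_increasing; lra.
Qed.

Lemma Cfun_continuous t : 0 <= t < phi -> continuity_pt (fun s => Cfun s phi) t.
Proof.
  intros. eapply continuity_pt_of_is_derive. apply is_derive_Cfun.
  pose proof (sin_shift_neg phi t ltac:(lra) ltac:(lra)). lra.
Qed.

Lemma Cfun_unbounded_below K : 0 < K -> exists y, S phi < y < phi /\ Cfun y phi < - K.
Proof.
  intros HK. pose proof (S_spec phi Hphi).
  set (u := Rmin (1 / 2) (Rmin (1 / (2 * K)) ((phi - S phi) / 2))).
  assert (Hu1 : u <= 1 / 2) by (unfold u; apply Rmin_l).
  assert (Hu2 : u <= 1 / (2 * K))
    by (unfold u; eapply Rle_trans; [apply Rmin_r|apply Rmin_l]).
  assert (Hu3 : u <= (phi - S phi) / 2)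
    by (unfold u; eapply Rle_trans; [apply Rmin_r|apply Rmin_r]).
  assert (Hu0 : 0 < u).
  { unfold u. apply Rmin_glb_lt; [lra|]. apply Rmin_glb_lt; [|lra].
    apply Rdiv_lt_0_compat; lra. }
  exists (phi - u). split; [lra|].
  pose proof PI2_3_2.
  assert (Hsu : 0 < sin u < u) by (split; [apply sin_gt_0|apply sin_lt_x]; lra).
  assert (Hcu : 7 / 8 <= cos u).
  { replace u with (2 * (u / 2)) by field. rewrite cos_2a_sin.
    pose proof (sin_lt_x (u / 2) ltac:(lra)).
    pose proof (sin_gt_0 (u / 2) ltac:(lra) ltac:(lra)).
    unfold Rsqr. nra. }
  assert (HKu : K * u <= 1 / 2).
  { apply Rmult_le_compat_l with (r := K) in Hu2; [|lra].
    replace (K * (1 / (2 * K))) with (1 / 2) in Hu2 by (field; lra). lra. }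
  unfold Cfun. replace (phi - u - phi) with (- u) by ring.
  rewrite cos_neg, sin_neg.
  set (v := (phi - u) * (cos u / - sin u)).
  assert (Ev : v * sin u = - ((phi - u) * cos u)) by (unfold v; field; lra).
  nra.
Qed.

Lemma C1inv_spec r : 0 < r < M phi ->
  0 <= C1inv r phi <= S phi /\ Cfun (C1inv r phi) phi = r.
Proof.
  intros Hr. unfold C1inv. apply epsilon_spec.
  pose proof (S_spec phi Hphi).
  destruct (IVT_interv (fun t => Cfun t phi - r) 0 (S phi)) as [z [Hz Hfz]];
    try rewrite Cfun_0; try rewrite Cfun_S; try lra.
  - intros. apply (continuity_pt_minus (fun t => Cfun t phi) (fun _ => r)).
    + apply Cfun_continuous; lra.
    + apply continuity_pt_const. intros ? ?; auto.
  - exists z. split; lra.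
Qed.

Lemma C2inv_spec r : r < M phi ->
  S phi <= C2inv r phi < phi /\ Cfun (C2inv r phi) phi = r.
Proof.
  intros Hr. unfold C2inv. apply epsilon_spec.
  pose proof (S_spec phi Hphi).
  destruct (Cfun_unbounded_below (Rabs r + 1)) as [y [Hy Cy]].
  { pose proof (Rabs_pos r); lra. }
  pose proof (Rle_abs (- r)) as Habs. rewrite Rabs_Ropp in Habs.
  destruct (IVT_interv (fun t => r - Cfun t phi) (S phi) y) as [z [Hz Hfz]];
    try rewrite Cfun_S; try lra.
  - intros. apply (continuity_pt_minus (fun _ => r) (fun t => Cfun t phi)).
    + apply continuity_pt_const. intros ? ?; auto.
    + apply Cfun_continuous; lra.
  - exists z. split; lra.
Qed.

Lemma Cfun_above_level r t : 0 < r < M phi -> 0 <= t < phi ->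
  (r < Cfun t phi <-> C1inv r phi < t < C2inv r phi).
Proof.
  intros Hr Ht.
  destruct (C1inv_spec r Hr) as [H1 E1]. destruct (C2inv_spec r ltac:(lra)) as [H2 E2].
  assert (S phi < C2inv r phi).
  { destruct (proj1 H2) as [|E]; [lra|].
    rewrite <- E, Cfun_S in E2; lra. }
  destruct (Rle_lt_dec t (S phi)).
  - pose proof (Cfun_increasing_iff (C1inv r phi) t H1 ltac:(lra)). rewrite E1 in *.
    split; intro; lra.
  - pose proof (Cfun_decreasing_iff (C2inv r phi) t H2 ltac:(lra)). rewrite E2 in *.
    split; intro; lra.
Qed.

Lemma Cfun_below_neg_level r t : r < 0 -> 0 <= t < phi ->
  (Cfun t phi < r <-> C2inv r phi < t).
Proof.
  intros Hr Ht.
  destruct (C2inv_spec r ltac:(pose proof M_pos; lra)) as [H2 E2].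
  destruct (Rle_lt_dec t (S phi)).
  - pose proof (Cfun_nonneg t ltac:(lra)). split; intro; lra.
  - pose proof (Cfun_decreasing_iff t (C2inv r phi) ltac:(lra) H2). rewrite E2 in *.
    split; intro; lra.
Qed.

End ShapeOfC.

(* For y <> 0 and r = |x + iy|: x/r lies strictly inside (-1,1) and
   sqrt(1 - (x/r)^2) = |y|/r; this is what makes Arg well defined off the real axis. *)
Lemma polar_decomposition (x y : R) : y <> 0 ->
  let r := sqrt (x ^ 2 + y ^ 2) in
  0 < r /\ -1 < x / r < 1 /\ sqrt (1 - (x / r)²) = Rabs y / r.
Proof.
  intros Hy r.
  assert (Hy2 : 0 < y ^ 2) by (simpl; nra).
  assert (Hr2 : r * r = x ^ 2 + y ^ 2) by (apply sqrt_sqrt; simpl; nra).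
  assert (Hr : 0 < r) by (apply sqrt_lt_R0; simpl; nra).
  assert (Hxr : (x / r)² < 1).
  { unfold Rsqr. replace (x / r * (x / r)) with (x * x / (r * r)) by (field; lra).
    rewrite Hr2. apply Rlt_div_l; simpl; nra. }
  split; [auto|split].
  - unfold Rsqr in Hxr. set (q := x / r) in *. split; nra.
  - replace (1 - (x / r)²) with ((Rabs y / r)²).
    + apply sqrt_Rsqr. apply Rdiv_le_0_compat; [apply Rabs_pos|lra].
    + unfold Rsqr.
      replace (Rabs y / r * (Rabs y / r)) with (Rabs y * Rabs y / (r * r)) by (field; lra).
      replace (x / r * (x / r)) with (x * x / (r * r)) by (field; lra).
      rewrite <- Rabs_mult, Rabs_right by nra. rewrite Hr2. field. simpl; nra.
Qed.

Lemma Arg_spec (w : C) : Im w <> 0 ->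
  -PI < Arg w <= PI /\ w = (Cmod w * cos (Arg w), Cmod w * sin (Arg w))%R.
Proof.
  intros Hy. unfold Arg. apply epsilon_spec.
  destruct w as [x y]. simpl in Hy. unfold Cmod; simpl fst; simpl snd.
  destruct (polar_decomposition x y Hy) as [Hr [Hb Hs]].
  set (r := sqrt (x ^ 2 + y ^ 2)) in *.
  pose proof (acos_bound_lt (x / r) Hb).
  assert (Hc : -1 <= x / r <= 1) by lra.
  destruct (Rlt_dec 0 y).
  - exists (acos (x / r)). split; [lra|].
    rewrite cos_acos, sin_acos, Hs by auto. rewrite Rabs_right by lra.
    f_equal; field; lra.
  - exists (- acos (x / r)). split; [lra|].
    rewrite cos_neg, sin_neg, cos_acos, sin_acos, Hs by auto. rewrite Rabs_left by lra.
    f_equal; field; lra.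
Qed.

(* Re w = |w| cos |Arg w|: this turns (a,w) in D_c into |w| cos phi < a < |w|. *)
Lemma Re_Arg (w : C) : Im w <> 0 -> Re w = Cmod w * cos (Rabs (Arg w)).
Proof.
  intros Hy. destruct (Arg_spec w Hy) as [_ E].
  replace (cos (Rabs (Arg w))) with (cos (Arg w)).
  - rewrite E at 1. reflexivity.
  - destruct (Rle_lt_dec 0 (Arg w)).
    + rewrite Rabs_right; lra.
    + rewrite Rabs_left, cos_neg by lra. reflexivity.
Qed.

Lemma acos_lt_iff x y : -1 <= x <= 1 -> -1 <= y <= 1 -> (x < y <-> acos y < acos x).
Proof.
  intros Hx Hy. pose proof (acos_bound x). pose proof (acos_bound y).
  pose proof (cos_acos x Hx). pose proof (cos_acos y Hy).
  split; intro Hlt.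
  - destruct (Rtotal_order (acos y) (acos x)) as [h|[h|h]]; auto; exfalso.
    + assert (x = y) by congruence. lra.
    + pose proof (cos_decreasing_1 (acos x) (acos y)
        ltac:(lra) ltac:(lra) ltac:(lra) ltac:(lra) h). lra.
  - pose proof (cos_decreasing_1 (acos y) (acos x)
      ltac:(lra) ltac:(lra) ltac:(lra) ltac:(lra) Hlt). lra.
Qed.

Lemma Rdiv_lt_swap_pos a r p : 0 < a -> 0 < r -> 0 < p -> (r < p <-> a / p < a / r).
Proof.
  intros. set (u := a / r). set (v := a / p).
  assert (u * r = a) by (unfold u; field; lra). assert (v * p = a) by (unfold v; field; lra).
  assert (0 < u) by (unfold u; apply Rdiv_lt_0_compat; lra).
  assert (0 < v) by (unfold v; apply Rdiv_lt_0_compat; lra).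
  split; intro; nra.
Qed.

Lemma Rdiv_lt_swap_neg a r p : a < 0 -> 0 < r -> 0 < p -> (r < p <-> a / r < a / p).
Proof.
  intros. pose proof (Rdiv_lt_swap_pos (- a) r p ltac:(lra) H0 H1).
  unfold Rdiv in *. split; intro; nra.
Qed.

(* The angle theta(a,r) = phi - arccos(a/r), and the radius rho(t) = -t / sin(t - phi);
   by definition R_j(r;phi) = rho(C_j^{-1}(r;phi)). *)
Definition theta (phi a r : R) : R := phi - acos (a / r).
Definition rho (phi t : R) : R := - t / sin (t - phi).

Definition tau_polar (phi a r : R) : R := / sqrt (r ^ 2 - a ^ 2) * theta phi a r.

Lemma theta_lt_iff_neg phi a r p : a < 0 -> 0 < r -> 0 < p ->
  -1 <= a / r <= 1 -> -1 <= a / p <= 1 ->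
  (r < p <-> theta phi a r < theta phi a p).
Proof.
  intros. unfold theta. rewrite (Rdiv_lt_swap_neg a r p), (acos_lt_iff (a / r) (a / p)) by lra.
  lra.
Qed.

Lemma theta_lt_iff_pos phi a r p : 0 < a -> 0 < r -> 0 < p ->
  -1 <= a / r <= 1 -> -1 <= a / p <= 1 ->
  (r < p <-> theta phi a p < theta phi a r).
Proof.
  intros. unfold theta. rewrite (Rdiv_lt_swap_pos a r p), (acos_lt_iff (a / p) (a / r)) by lra.
  lra.
Qed.

Lemma theta_rho phi a t : PI / 2 < phi < PI -> 0 < t < phi -> Cfun t phi = - a ->
  0 < rho phi t /\ -1 <= a / rho phi t <= 1 /\ theta phi a (rho phi t) = t.
Proof.
  intros Hp Ht HC. pose proof (sin_shift_neg phi t ltac:(lra) ltac:(lra)).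
  assert (E : a / rho phi t = cos (phi - t)).
  { replace a with (- Cfun t phi) by lra. unfold Cfun, rho.
    replace (phi - t) with (- (t - phi)) by ring. rewrite cos_neg. field. lra. }
  split; [|split].
  - unfold rho, Rdiv. pose proof (Rinv_lt_0_compat _ H). nra.
  - rewrite E. apply COS_bound.
  - unfold theta. rewrite E, acos_cos; lra.
Qed.

Section PolarForm.
Variables phi a r : R.
Hypothesis Hphi : PI / 2 < phi < PI.
Hypothesis Hr : 0 < r.
Hypothesis Ha : r * cos phi < a < r.

Lemma polar_form :
  0 < theta phi a r < phi /\ -1 <= a / r <= 1 /\
  0 < sin (phi - theta phi a r) /\
  a = r * cos (phi - theta phi a r) /\
  sqrt (r ^ 2 - a ^ 2) = r * sin (phi - theta phi a r).
Proof.
  replace (phi - theta phi a r) with (acos (a / r)) by (unfold theta; ring).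
  assert (Hcp : -1 < cos phi).
  { pose proof (cos_decreasing_1 phi PI ltac:(lra) ltac:(lra) ltac:(lra) ltac:(lra) ltac:(lra)).
    rewrite cos_PI in H. lra. }
  assert (Har : cos phi < a / r < 1).
  { set (q := a / r). assert (q * r = a) by (unfold q; field; lra). split; nra. }
  assert (Hb : -1 <= a / r <= 1) by lra.
  set (al := acos (a / r)).
  assert (Hal : 0 < al < phi).
  { split.
    - rewrite <- acos_1. apply (proj1 (acos_lt_iff (a / r) 1 Hb ltac:(lra))); lra.
    - rewrite <- (acos_cos phi) by lra.
      apply (proj1 (acos_lt_iff (cos phi) (a / r) ltac:(lra) Hb)); lra. }
  assert (Hs : 0 < sin al) by (apply sin_gt_0; lra).
  assert (Hco : a = r * cos al) by (unfold al; rewrite cos_acos by lra; field; lra).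
  unfold theta; fold al. repeat split; try lra.
  rewrite <- (sqrt_Rsqr (r * sin al)) by nra. f_equal. unfold Rsqr.
  pose proof (sin2_cos2 al) as Hpy. unfold Rsqr in Hpy.
  rewrite Hco. nra.
Qed.

Lemma tau_gt1_iff_C : a <> 0 ->
  (tau_polar phi a r > 1 <-> a * (Cfun (theta phi a r) phi + a) < 0).
Proof.
  intros Ha0. destruct polar_form as [_ [_ [Hs [Hco Hsq]]]].
  unfold tau_polar. rewrite Hsq.
  set (th := theta phi a r) in *.
  set (s := sin (phi - th)) in *. set (c := cos (phi - th)) in *.
  assert (HC : Cfun th phi * s = - th * c).
  { unfold Cfun. replace (th - phi) with (- (phi - th)) by ring.
    rewrite sin_neg, cos_neg. fold s c. field. lra. }
  assert (Hc : c <> 0) by (intro E; rewrite E in Hco; lra).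
  assert (Key : a * (Cfun th phi + a) * s = r * (c * c) * (r * s - th)) by (rewrite Hco; nra).
  assert (Hcc : 0 < c * c) by nra.
  assert (Hrs : 0 < r * s) by nra.
  assert (Ltau : / (r * s) * th > 1 <-> r * s < th).
  { pose proof (Rinv_0_lt_compat _ Hrs) as Hi.
    assert (E : th = / (r * s) * th * (r * s)) by (field; lra).
    split; intro Hlt; [rewrite E; nra|].
    replace (/ (r * s) * th) with (1 + / (r * s) * (th - r * s)) by (field; lra). nra. }
  rewrite Ltau.
  assert (0 < r * (c * c)) by nra.
  split; intro Hlt; nra.
Qed.

(* a > 0: only the decreasing branch of C is relevant. *)
Lemma tau_gt1_pos : 0 < a -> (tau_polar phi a r > 1 <-> r < R_2 (- a) phi).
Proof.
  intros Hpos. destruct polar_form as [Hth [Hb _]].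
  pose proof (S_spec phi Hphi). pose proof (M_pos phi Hphi).
  destruct (C2inv_spec phi Hphi (- a) ltac:(lra)) as [H2 E2].
  destruct (theta_rho phi a (C2inv (- a) phi) Hphi ltac:(lra) E2) as [Hp [Hbp Eth]].
  change (R_2 (- a) phi) with (rho phi (C2inv (- a) phi)).
  rewrite tau_gt1_iff_C, (theta_lt_iff_pos phi a r), Eth by lra.
  rewrite <- (Cfun_below_neg_level phi Hphi (- a)) by lra.
  split; intro; nra.
Qed.

(* a = 0: then theta = phi - pi/2 = C_2^{-1}(0;phi) = R_2(0;phi) and tau = theta / r. *)
Lemma tau_gt1_zero : a = 0 -> (tau_polar phi a r > 1 <-> r < R_2 (- a) phi).
Proof.
  intros Ha0. destruct polar_form as [_ [_ [_ [_ Hsq]]]].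
  assert (Htheta : forall x, theta phi a x = phi - PI / 2).
  { intro x. unfold theta. rewrite Ha0, Rdiv_0_l, acos_0. reflexivity. }
  pose proof (S_spec phi Hphi). pose proof (M_pos phi Hphi).
  destruct (C2inv_spec phi Hphi (- a) ltac:(lra)) as [H2 E2].
  destruct (theta_rho phi a (C2inv (- a) phi) Hphi ltac:(lra) E2) as [Hp [_ Eth]].
  rewrite Htheta in Eth.
  assert (Hrho : rho phi (C2inv (- a) phi) = phi - PI / 2).
  { unfold rho. rewrite <- Eth. replace (phi - PI / 2 - phi) with (- (PI / 2)) by ring.
    rewrite sin_neg, sin_PI2. field. }
  change (R_2 (- a) phi) with (rho phi (C2inv (- a) phi)). rewrite Hrho.
  unfold tau_polar. rewrite Htheta, Hsq, Htheta.
  replace (phi - (phi - PI / 2)) with (PI / 2) by ring. rewrite sin_PI2, Rmult_1_r.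
  pose proof (Rinv_0_lt_compat _ Hr).
  assert (E : phi - PI / 2 = / r * (phi - PI / 2) * r) by (field; lra).
  split; intro Hlt; [rewrite E; nra|].
  replace (/ r * (phi - PI / 2)) with (1 + / r * (phi - PI / 2 - r)) by (field; lra). nra.
Qed.

(* -M(phi) < a < 0: the level -a is attained on both branches of C. *)
Lemma tau_gt1_neg : - M phi < a < 0 ->
  (tau_polar phi a r > 1 <-> R_1 (- a) phi < r < R_2 (- a) phi).
Proof.
  intros Hneg. destruct polar_form as [Hth [Hb _]].
  pose proof (S_spec phi Hphi).
  destruct (C1inv_spec phi Hphi (- a) ltac:(lra)) as [H1 E1].
  destruct (C2inv_spec phi Hphi (- a) ltac:(lra)) as [H2 E2].
  assert (0 < C1inv (- a) phi).
  { destruct (proj1 H1) as [|E]; [lra|]. rewrite <- E, Cfun_0 in E1; lra. }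
  destruct (theta_rho phi a (C1inv (- a) phi) Hphi ltac:(lra) E1) as [Hp1 [Hbp1 Eth1]].
  destruct (theta_rho phi a (C2inv (- a) phi) Hphi ltac:(lra) E2) as [Hp2 [Hbp2 Eth2]].
  change (R_1 (- a) phi) with (rho phi (C1inv (- a) phi)).
  change (R_2 (- a) phi) with (rho phi (C2inv (- a) phi)).
  rewrite tau_gt1_iff_C, (theta_lt_iff_neg phi a _ r), (theta_lt_iff_neg phi a r), Eth1, Eth2
    by lra.
  rewrite <- (Cfun_above_level phi Hphi (- a)) by lra.
  split; intro; nra.
Qed.

(* a <= -M(phi): the level -a is never exceeded, so tau <= 1. *)
Lemma tau_not_gt1_neg_large : a <= - M phi -> ~ tau_polar phi a r > 1.
Proof.
  intros Hlow. destruct polar_form as [Hth _].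
  pose proof (M_pos phi Hphi). pose proof (Cfun_le_M phi Hphi (theta phi a r) ltac:(lra)).
  rewrite tau_gt1_iff_C by lra. nra.
Qed.

Lemma tau_polar_gt1_iff :
  tau_polar phi a r > 1 <->
     (0 <= a /\ r < R_2 (- a) phi) \/
     (- M phi < a < 0 /\ R_1 (- a) phi < r < R_2 (- a) phi).
Proof.
  destruct (Rtotal_order a 0) as [Hneg|[Hz|Hpos]].
  - destruct (Rlt_le_dec (- M phi) a) as [Hsmall|Hlarge].
    + rewrite tau_gt1_neg by lra. split; [right; auto|intros [[? ?]|[? ?]]; [lra|auto]].
    + pose proof (tau_not_gt1_neg_large Hlarge). split; [tauto|intros [[? ?]|[? ?]]; lra].
  - rewrite tau_gt1_zero by auto. split; [left; split; auto; lra|intros [[? ?]|[? ?]]; [auto|lra]].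
  - rewrite tau_gt1_pos by auto. split; [left; split; auto; lra|intros [[? ?]|[? ?]]; [auto|lra]].
Qed.

End PolarForm.

Theorem mainTheorem15 (a : R) (w : C) :
  Im w <> 0 ->
  D_c a w ->
  PI / 2 < Rabs (Arg w) < PI ->
  (tau_c a w > 1 <->
     (0 <= a /\ Cmod w < R_2 (- a) (Rabs (Arg w))) \/
     (- M (Rabs (Arg w)) < a < 0 /\
        R_1 (- a) (Rabs (Arg w)) < Cmod w < R_2 (- a) (Rabs (Arg w)))).
Proof.
  intros Him [_ HD] Hphi.
  rewrite (Re_Arg w Him) in HD.
  assert (Hr : 0 < Cmod w).
  { destruct (Cmod_ge_0 w) as [|E]; [auto|]. rewrite <- E in HD. lra. }
  exact (tau_polar_gt1_iff (Rabs (Arg w)) a (Cmod w) Hphi Hr HD).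
Qed.
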